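(* Let $I=(N,O,\succsim)$ be a general instance, $p$ a generalized random matching and $p'$ its associated random matching for the associated instance $I'$. Then $p$ is ex-post weakly stable if and only if $p'$ is ex-post weakly stable and $p$ is non-wasteful (i.e., $p'$ respects non-wastefulness).
   Context: General instance: $N=\{1,\dots,n\}$ agents, $O=\{o_1,\dots,o_m\}$ objects ($m,n\ge1$ arbitrary), $\emptyset$ the null object; each agent $i$ has a weak order $\succsim_i$ over $O\cup\{\emptyset\}$, each object $o$ a weak order $\succsim_o$ over $N\cup\{\emptyset\}$, with either $o\succ_i\emptyset$ or $\emptyset\succ_i o$, and either $i\succ_o\emptyset$ or $\emptyset\succ_o i$. $(i,o)$ is acceptable if $o\succ_i\emptyset$ and $i\succ_o\emptyset$. A generalized random matching is an $n\times m$ nonnegative matrix with row and column sums $\le1$; deterministic if entries are in $\{0,1\}$. $p$ is individually rational if $p(i,o)=0$ whenever $\emptyset\succ_i o$ or $\emptyset\succ_o i$; non-wasteful if there is no acceptable $(i,o)$ with $\sum_{o':o'\succsim_i o}p(i,o')<1$ and $\sum_j p(j,o)<1$. A generalized deterministic matching is weakly stable if it is individually rational and there is no acceptable $(i,o)$ with $\sum_{o':o'\succsim_i o}p(i,o')=0$ and $\sum_{j:j\succsim_o i}p(j,o)=0$. A generalized random matching $p$ is ex-post weakly stable if it is non-wasteful and can be written as $\sum_{j}\lambda_jP_j$ ($\lambda_j\in(0,1]$, $\sum\lambda_j=1$) with every $P_j$ a weakly stable generalized deterministic matching. Associated instance: $D=\{d_1,\dots,d_m\}$, $\Phi=\{\phi_1,\dots,\phi_n\}$,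 $N'=N\cup D$, $O'=O\cup\Phi$, with weak orders (blocks best to worst, consecutive blocks strict): $i\in N$: objects acceptable to $i$ by $\succsim_i$, $\phi_i$, $\phi_k$ ($k\ne i$) in increasing index, objects unacceptable to $i$ by $\succsim_i$; $o_j$: agents acceptable to $o_j$ by $\succsim_{o_j}$, $d_j$, $d_k$ ($k\ne j$) in increasing index, agents unacceptable to $o_j$ by $\succsim_{o_j}$; $d_j$: $o_j$, other objects of $O$ in increasing index, then null objects with $\phi_k\succsim'_{d_j}\phi_l$ iff $k\succsim_{o_j}l$; $\phi_i$: $i$, other agents of $N$ in increasing index, then dummies with $d_k\succsim'_{\phi_i}d_l$ iff $o_k\succsim_i o_l$. Associated random matching: $p'(i,o_j)=p(i,o_j)$, $p'(d_j,\phi_i)=p(i,o_j)$, $p'(i,\phi_i)=1-\sum_o p(i,o)$, $p'(d_j,o_j)=1-\sum_i p(i,o_j)$, other entries $0$ (an $(n+m)\times(n+m)$ bistochastic matrix). For $I'$: a deterministic matching $q$ (bistochastic $\{0,1\}$-matrix) is weakly stable if there are no $a,b\in N'$, $c,c'\in O'$ with $q(a,c')=1$, $q(b,c)=1$, $c\succ'_a c'$, $a\succ'_c b$; a random matching (bistochastic matrix) is ex-post weakly stable if it is a convex combination with positive weights of weakly stable deterministic matchings. *)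

From HB Require Import structures.
From mathcomp Require Import all_boot all_order all_algebra.
From mathcomp Require Import reals.
Set Implicit Arguments. Unset Strict Implicit. Unset Printing Implicit Defensive.
Import Order.TTheory GRing.Theory Num.Theory.
Local Open Scope ring_scope.

Definition weak_order (T : Type) (r : rel T) : Prop := total r /\ transitive r.

Definition sgt (T : Type) (r : rel T) : rel T := fun x y => r x y && ~~ r y x.

(* General instance: agents 'I_n, objects 'I_m, null object = None.
   aprefs i x y  means  x ≿_i y ;  oprefs o x y  means  x ≿_o y. *)
Record instance (n m : nat) := Instance {
  aprefs : 'I_n -> rel (option 'I_m);
  oprefs : 'I_m -> rel (option 'I_n);
  aprefs_wo : forall i, weak_order (aprefs i);
  oprefs_wo : forall o, weak_order (oprefs o);
  aprefs_null : forall i o,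
    sgt (aprefs i) (Some o) None || sgt (aprefs i) None (Some o);
  oprefs_null : forall o i,
    sgt (oprefs o) (Some i) None || sgt (oprefs o) None (Some i)
}.

Section General.
Variables (R : realType) (n m : nat) (I : instance n m).

Definition acceptable (i : 'I_n) (o : 'I_m) : bool :=
  sgt (aprefs I i) (Some o) None && sgt (oprefs I o) (Some i) None.

Definition gen_random_matching (p : 'M[R]_(n, m)) : Prop :=
  (forall i o, 0 <= p i o) /\
  (forall i, \sum_(o < m) p i o <= 1) /\
  (forall o, \sum_(i < n) p i o <= 1).

Definition gen_deterministic (p : 'M[R]_(n, m)) : Prop :=
  gen_random_matching p /\ (forall i o, p i o = 0 \/ p i o = 1).

Definition indiv_rational (p : 'M[R]_(n, m)) : Prop :=
  forall i o, (sgt (aprefs I i) None (Some o) || sgt (oprefs I o) None (Some i)) ->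
    p i o = 0.

Definition non_wasteful (p : 'M[R]_(n, m)) : Prop :=
  ~ exists i o, [/\ acceptable i o,
      \sum_(o' < m | aprefs I i (Some o') (Some o)) p i o' < 1 &
      \sum_(j < n) p j o < 1].

Definition weakly_stable_det (p : 'M[R]_(n, m)) : Prop :=
  gen_deterministic p /\ indiv_rational p /\
  ~ exists i o, [/\ acceptable i o,
      \sum_(o' < m | aprefs I i (Some o') (Some o)) p i o' = 0 &
      \sum_(j < n | oprefs I o (Some j) (Some i)) p j o = 0].

Definition ex_post_ws (p : 'M[R]_(n, m)) : Prop :=
  non_wasteful p /\
  exists (k : nat) (lam : 'I_k -> R) (P : 'I_k -> 'M[R]_(n, m)),
    [/\ forall t, 0 < lam t <= 1,
        \sum_(t < k) lam t = 1,
        p = \sum_(t < k) lam t *: P t &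
        forall t, weakly_stable_det (P t)].

(* ---------- Associated instance I' ----------
   N' = 'I_(n + m): split a = inl i (agent i) or inr j (dummy d_j).
   O' = 'I_(m + n): split c = inl o (object o) or inr i (null object phi_i).
   Preferences: block number (smaller = better, consecutive blocks strict),
   then comparison inside a block. *)

Definition assoc_apref (i : 'I_n) : rel 'I_(m + n) := fun c c' =>
  let ai := aprefs I i in
  let blk (x : 'I_(m + n)) : nat :=
    match split x with
    | inl o => if sgt ai (Some o) None then 0 else 3
    | inr k => if k == i then 1 else 2
    end%N in
  (blk c < blk c')%N ||
  ((blk c == blk c') &&
   match split c, split c' with
   | inl o, inl o' => ai (Some o) (Some o')
   | inr k, inr l => (k <= l)%N
   | _, _ => false
   end).

Definition assoc_dpref (j : 'I_m) : rel 'I_(m + n) := fun c c' =>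
  let blk (x : 'I_(m + n)) : nat :=
    match split x with
    | inl o => if o == j then 0 else 1
    | inr _ => 2
    end%N in
  (blk c < blk c')%N ||
  ((blk c == blk c') &&
   match split c, split c' with
   | inl o, inl o' => (o <= o')%N
   | inr k, inr l => oprefs I j (Some k) (Some l)
   | _, _ => false
   end).

Definition assoc_opref (j : 'I_m) : rel 'I_(n + m) := fun a a' =>
  let oj := oprefs I j in
  let blk (x : 'I_(n + m)) : nat :=
    match split x with
    | inl i => if sgt oj (Some i) None then 0 else 3
    | inr k => if k == j then 1 else 2
    end%N in
  (blk a < blk a')%N ||
  ((blk a == blk a') &&
   match split a, split a' with
   | inl i, inl i' => oj (Some i) (Some i')
   | inr k, inr l => (k <= l)%N
   | _, _ => false
   end).

Definition assoc_phipref (i : 'I_n) : rel 'I_(n + m) := fun a a' =>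
  let blk (x : 'I_(n + m)) : nat :=
    match split x with
    | inl k => if k == i then 0 else 1
    | inr _ => 2
    end%N in
  (blk a < blk a')%N ||
  ((blk a == blk a') &&
   match split a, split a' with
   | inl k, inl k' => (k <= k')%N
   | inr k, inr l => aprefs I i (Some k) (Some l)
   | _, _ => false
   end).

Definition assoc_agent_pref (a : 'I_(n + m)) : rel 'I_(m + n) :=
  match split a with inl i => assoc_apref i | inr j => assoc_dpref j end.

Definition assoc_object_pref (c : 'I_(m + n)) : rel 'I_(n + m) :=
  match split c with inl o => assoc_opref o | inr i => assoc_phipref i end.

Definition assoc_matching (p : 'M[R]_(n, m)) : 'M[R]_(n + m, m + n) :=
  \matrix_(a, c)
    match split a, split c with
    | inl i, inl o => p i o
    | inr j, inr i => p i j
    | inl i, inr k => if k == i then 1 - \sum_(o < m) p i o else 0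
    | inr j, inl o => if o == j then 1 - \sum_(i < n) p i j else 0
    end.

(* random matching of I' = bistochastic matrix *)
Definition bistochastic (q : 'M[R]_(n + m, m + n)) : Prop :=
  (forall a c, 0 <= q a c) /\
  (forall a, \sum_c q a c = 1) /\
  (forall c, \sum_a q a c = 1).

Definition assoc_deterministic (q : 'M[R]_(n + m, m + n)) : Prop :=
  bistochastic q /\ (forall a c, q a c = 0 \/ q a c = 1).

Definition assoc_weakly_stable_det (q : 'M[R]_(n + m, m + n)) : Prop :=
  assoc_deterministic q /\
  ~ exists a b c c', [/\ q a c' = 1, q b c = 1,
       sgt (assoc_agent_pref a) c c' &
       sgt (assoc_object_pref c) a b].

Definition assoc_ex_post_ws (q : 'M[R]_(n + m, m + n)) : Prop :=
  bistochastic q /\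
  exists (k : nat) (lam : 'I_k -> R) (Q : 'I_k -> 'M[R]_(n + m, m + n)),
    [/\ forall t, 0 < lam t,
        \sum_(t < k) lam t = 1,
        q = \sum_(t < k) lam t *: Q t &
        forall t, assoc_weakly_stable_det (Q t)].

End General.

From HB Require Import structures.
From mathcomp Require Import all_boot all_order all_algebra.
From mathcomp Require Import reals.
Set Implicit Arguments. Unset Strict Implicit. Unset Printing Implicit Defensive.
Import Order.TTheory GRing.Theory Num.Theory.
Local Open Scope ring_scope.

(* The map [P |-> P'] commutes with convex combinations and [ulsubmx] (the
   agent-object block) is a left inverse of it, so it suffices to compare weak
   stability of deterministic matchings.
   Let P be weakly stable. In P' an agent never prefers a null object to its
   partner, since it ranks its acceptable objects and then its own null object
   above every other null object; symmetrically an object never prefers a dummy.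
   An agent-object pair blocks P' only if it blocks P. Finally, if d_j and phi_k
   block P', where P matches (i, o_j) and (k, o_l), then k >_{o_j} i and
   o_j >_k o_l, so (k, o_j) blocks P.
   Conversely, let Q be weakly stable for I'. Its block is individually
   rational: an agent i holding an unacceptable object would block Q together
   with phi_i, which ranks i first (symmetrically for objects and dummies). And a
   blocking pair of the block blocks Q. *)

Lemma split_lshift (a b : nat) (i : 'I_a) : split (lshift b i) = inl i.
Proof. exact: (@unsplitK a b (inl i)). Qed.

Lemma split_rshift (a b : nat) (j : 'I_b) : split (rshift a j) = inr j.
Proof. exact: (@unsplitK a b (inr j)). Qed.

Definition split_shiftE := (split_lshift, split_rshift).

Lemma sgt_asym (T : Type) (r : rel T) x y : sgt r x y -> ~~ sgt r y x.
Proof. by case/andP=> rxy _; rewrite /sgt rxy andbF. Qed.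

Section WeakOrder.
Variables (T : Type) (r : rel T).
Hypothesis r_wo : weak_order r.

Lemma sgt_weak_order x y : sgt r x y = ~~ r y x.
Proof.
have [r_total _] := r_wo; rewrite /sgt; have [_|nryx] := boolP (r y x); first by rewrite andbF.
by rewrite andbT; case/orP: (r_total x y) => //; rewrite (negbTE nryx).
Qed.

Lemma sgt_trans y x z : sgt r x y -> sgt r y z -> sgt r x z.
Proof.
have [r_total r_trans] := r_wo; rewrite !sgt_weak_order => nyx nzy.
apply/negP => rzx; case/negP: nzy; apply: r_trans rzx _.
by case/orP: (r_total x y) => //; rewrite (negbTE nyx).
Qed.

End WeakOrder.

Section ZeroOneSums.
Variables (R : numDomainType) (T : finType) (F : T -> R).

Lemma psum_le1_eq1 x y : (forall z, 0 <= F z) -> \sum_z F z <= 1 ->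
  F x = 1 -> y != x -> F y = 0.
Proof.
move=> F_ge0 sum_le1 Fx1 neq_yx.
have others0 : \sum_(z | z != x) F z = 0.
  apply/le_anti; rewrite sumr_ge0 // andbT.
  by move: sum_le1; rewrite (bigD1 x) //= Fx1 -{2}(addr0 1) lerD2l.
by apply: (psumr_eq0P _ others0) => // z _.
Qed.

Hypothesis F01 : forall x, F x = 0 \/ F x = 1.

Lemma sum01_eq0_or_eq1 : \sum_z F z <= 1 -> \sum_z F z = 0 \/ \sum_z F z = 1.
Proof.
have F_ge0 z : 0 <= F z by case: (F01 z) => ->; rewrite ?ler01.
move=> sum_le1; case: (pickP (fun z => F z == 1)) => [x /eqP Fx1|notF1].
  right; rewrite (bigD1 x) //= Fx1 big1 ?addr0 // => y.
  exact: psum_le1_eq1 Fx1.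
left; apply: big1 => z _; case: (F01 z) => // Fz1.
by move: (notF1 z); rewrite Fz1 eqxx.
Qed.

Lemma sum01_eq1_exists : \sum_z F z = 1 -> exists x, F x = 1.
Proof.
move=> sum1; case: (pickP (fun z => F z == 1)) => [x /eqP|notF1]; first by exists x.
suff : \sum_z F z = 0 by rewrite sum1 => /eqP; rewrite oner_eq0.
by apply: big1 => z _; case: (F01 z) => // Fz1; move: (notF1 z); rewrite Fz1 eqxx.
Qed.

End ZeroOneSums.

Lemma sum_single_eq0 (R : numDomainType) (T : finType) (F : T -> R) (P : pred T) x :
  F x = 1 -> (forall y, y != x -> F y = 0) -> (\sum_(y | P y) F y == 0) = ~~ P x.
Proof.
move=> Fx1 others0; have [Px|nPx] := boolP (P x).
  by rewrite (bigD1 x) //= Fx1 big1 ?addr0 ?oner_eq0 // => y /andP[_ /others0].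
by rewrite big1 ?eqxx // => y Py; apply: others0; apply: contraNneq nPx => <-.
Qed.

Lemma if_sub1_eq1 (R : numDomainType) (b : bool) (S : R) :
  (if b then 1 - S else 0) = 1 -> b /\ S = 0.
Proof.
case: b => [S1|/eqP]; last by rewrite eq_sym oner_eq0.
by split=> //; rewrite -[S](subKr 1) S1 subrr.
Qed.

Lemma convex_weight_le1 (R : numDomainType) (k : nat) (lam : 'I_k -> R) t :
  (forall t, 0 < lam t) -> \sum_t lam t = 1 -> lam t <= 1.
Proof.
move=> lam_gt0 lam_sum1; rewrite -lam_sum1 (bigD1 t) //= lerDl.
by apply: sumr_ge0 => s _; apply: ltW.
Qed.

Section AssocPrefs.
Variables (n m : nat) (I : instance n m).
Local Notation ap := (aprefs I).
Local Notation op := (oprefs I).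

Lemma assoc_agent_pref_agent i : assoc_agent_pref I (lshift m i) = assoc_apref I i.
Proof. by rewrite /assoc_agent_pref split_lshift. Qed.

Lemma assoc_agent_pref_dummy j : assoc_agent_pref I (rshift n j) = assoc_dpref I j.
Proof. by rewrite /assoc_agent_pref split_rshift. Qed.

Lemma assoc_object_pref_object o : assoc_object_pref I (lshift n o) = assoc_opref I o.
Proof. by rewrite /assoc_object_pref split_lshift. Qed.

Lemma assoc_object_pref_null k : assoc_object_pref I (rshift m k) = assoc_phipref I k.
Proof. by rewrite /assoc_object_pref split_rshift. Qed.

Definition assoc_prefE := (assoc_agent_pref_agent, assoc_agent_pref_dummy,
  assoc_object_pref_object, assoc_object_pref_null).

Lemma assoc_apref_objects i o o' : sgt (ap i) (Some o') None ->
  sgt (assoc_apref I i) (lshift n o) (lshift n o') =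
  sgt (ap i) (Some o) None && sgt (ap i) (Some o) (Some o').
Proof.
by move=> acc'; rewrite [LHS]/sgt /assoc_apref !split_shiftE /= acc'; case: ifP.
Qed.

Lemma assoc_apref_object_null i o k :
  sgt (assoc_apref I i) (lshift n o) (rshift m k) = sgt (ap i) (Some o) None.
Proof. by rewrite [LHS]/sgt /assoc_apref !split_shiftE /=; case: ifP; case: ifP. Qed.

Lemma assoc_apref_null_object i k o :
  sgt (assoc_apref I i) (rshift m k) (lshift n o) = ~~ sgt (ap i) (Some o) None.
Proof. by rewrite [LHS]/sgt /assoc_apref !split_shiftE /=; case: ifP; case: ifP. Qed.

Lemma assoc_apref_null_own i k :
  sgt (assoc_apref I i) (rshift m k) (rshift m i) = false.
Proof.
rewrite /sgt /assoc_apref !split_shiftE /= eqxx.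
by case: eqP => [->|]; rewrite ?leqnn ?andbF.
Qed.

Lemma assoc_opref_agents o i i' : sgt (op o) (Some i') None ->
  sgt (assoc_opref I o) (lshift m i) (lshift m i') =
  sgt (op o) (Some i) None && sgt (op o) (Some i) (Some i').
Proof.
by move=> acc'; rewrite [LHS]/sgt /assoc_opref !split_shiftE /= acc'; case: ifP.
Qed.

Lemma assoc_opref_agent_dummy o i j :
  sgt (assoc_opref I o) (lshift m i) (rshift n j) = sgt (op o) (Some i) None.
Proof. by rewrite [LHS]/sgt /assoc_opref !split_shiftE /=; case: ifP; case: ifP. Qed.

Lemma assoc_opref_dummy_agent o j i :
  sgt (assoc_opref I o) (rshift n j) (lshift m i) = ~~ sgt (op o) (Some i) None.
Proof. by rewrite [LHS]/sgt /assoc_opref !split_shiftE /=; case: ifP; case: ifP. Qed.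

Lemma assoc_opref_dummy_own o j :
  sgt (assoc_opref I o) (rshift n j) (rshift n o) = false.
Proof.
rewrite /sgt /assoc_opref !split_shiftE /= eqxx.
by case: eqP => [->|]; rewrite ?leqnn ?andbF.
Qed.

Lemma assoc_dpref_own_top j c :
  c != lshift n j -> sgt (assoc_dpref I j) (lshift n j) c.
Proof.
rewrite /sgt /assoc_dpref.
case: (split_ordP c) => [o ->|k ->]; rewrite !split_shiftE /= ?eqxx //.
by rewrite eq_lshift => /negbTE ->.
Qed.

Lemma assoc_dpref_nulls j k l :
  sgt (assoc_dpref I j) (rshift m k) (rshift m l) = sgt (op j) (Some k) (Some l).
Proof. by rewrite /sgt /assoc_dpref !split_shiftE. Qed.

Lemma assoc_phipref_own_top k b :
  b != lshift m k -> sgt (assoc_phipref I k) (lshift m k) b.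
Proof.
rewrite /sgt /assoc_phipref.
case: (split_ordP b) => [i ->|j ->]; rewrite !split_shiftE /= ?eqxx //.
by rewrite eq_lshift => /negbTE ->.
Qed.

Lemma assoc_phipref_dummies k j l :
  sgt (assoc_phipref I k) (rshift n j) (rshift n l) = sgt (ap k) (Some j) (Some l).
Proof. by rewrite /sgt /assoc_phipref !split_shiftE. Qed.

End AssocPrefs.

Section GenDeterministic.
Variables (R : realType) (n m : nat) (P : 'M[R]_(n, m)).
Hypothesis P_det : gen_deterministic P.

Lemma gen_det_row_single i o o' : P i o = 1 -> o' != o -> P i o' = 0.
Proof. by have [[P_ge0 [P_row _]] _] := P_det; apply: psum_le1_eq1. Qed.

Lemma gen_det_col_single i j o : P i o = 1 -> j != i -> P j o = 0.
Proof. by have [[P_ge0 [_ P_col]] _] := P_det; apply: (psum_le1_eq1 (F := P^~ o)). Qed.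

Lemma gen_det_row_sum01 i : \sum_o P i o = 0 \/ \sum_o P i o = 1.
Proof. by have [[_ [P_row _]] P01] := P_det; apply: sum01_eq0_or_eq1. Qed.

Lemma gen_det_col_sum01 o : \sum_i P i o = 0 \/ \sum_i P i o = 1.
Proof.
by have [[_ [_ P_col]] P01] := P_det; apply: (sum01_eq0_or_eq1 (F := P^~ o)).
Qed.

End GenDeterministic.

Section AssocDeterministic.
Variables (R : realType) (n m : nat) (Q : 'M[R]_(n + m, m + n)).
Hypothesis Q_det : assoc_deterministic Q.

Lemma assoc_det_row_single a c c' : Q a c = 1 -> c' != c -> Q a c' = 0.
Proof. by have [[Q_ge0 [Q_row _]] _] := Q_det; apply: psum_le1_eq1; rewrite ?Q_row. Qed.

Lemma assoc_det_col_single a b c : Q a c = 1 -> b != a -> Q b c = 0.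
Proof.
by have [[Q_ge0 [_ Q_col]] _] := Q_det; apply: (psum_le1_eq1 (F := Q^~ c)); rewrite ?Q_col.
Qed.

Lemma assoc_det_row_exists a : exists c, Q a c = 1.
Proof. by have [[_ [Q_row _]] Q01] := Q_det; apply: sum01_eq1_exists. Qed.

Lemma assoc_det_col_exists c : exists a, Q a c = 1.
Proof. by have [[_ [_ Q_col]] Q01] := Q_det; apply: (sum01_eq1_exists (F := Q^~ c)). Qed.

End AssocDeterministic.

Section AssocMatching.
Variables (R : realType) (n m : nat).
Implicit Types P : 'M[R]_(n, m).

Lemma assoc_matching_agent_object P i o :
  assoc_matching P (lshift m i) (lshift n o) = P i o.
Proof. by rewrite mxE !split_shiftE. Qed.

Lemma assoc_matching_dummy_null P j i :
  assoc_matching P (rshift n j) (rshift m i) = P i j.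
Proof. by rewrite mxE !split_shiftE. Qed.

Lemma assoc_matching_agent_null P i k :
  assoc_matching P (lshift m i) (rshift m k) = if k == i then 1 - \sum_o P i o else 0.
Proof. by rewrite mxE !split_shiftE. Qed.

Lemma assoc_matching_dummy_object P j o :
  assoc_matching P (rshift n j) (lshift n o) = if o == j then 1 - \sum_i P i j else 0.
Proof. by rewrite mxE !split_shiftE. Qed.

Definition assoc_matchingE := (assoc_matching_agent_object, assoc_matching_dummy_null,
  assoc_matching_agent_null, assoc_matching_dummy_object).

Lemma ulsubmx_assoc_matching P : ulsubmx (assoc_matching P) = P.
Proof. by apply/matrixP => i o; rewrite !mxE !split_shiftE. Qed.

Lemma assoc_matching_bistochastic P :
  gen_random_matching P -> bistochastic (assoc_matching P).
Proof.
case=> P_ge0 [P_row P_col]; split; [|split].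
- move=> a c; case: (split_ordP a) => [i ->|j ->]; case: (split_ordP c) => [o ->|k ->];
    rewrite assoc_matchingE //; case: eqP => _ //; by rewrite subr_ge0.
- move=> a; rewrite big_split_ord /=; case: (split_ordP a) => [i ->|j ->];
    under eq_bigr do rewrite assoc_matchingE;
    under [X in _ + X]eq_bigr do rewrite assoc_matchingE.
  + rewrite [X in _ + X](bigD1 i) //= eqxx [X in _ + (_ + X)]big1 ?addr0 ?subrKC //.
    by move=> k /negbTE ->.
  + rewrite (bigD1 j) //= eqxx [X in _ + X + _]big1 ?addr0 ?subrK //.
    by move=> o /negbTE ->.
- move=> c; rewrite big_split_ord /=; case: (split_ordP c) => [o ->|k ->];
    under eq_bigr do rewrite assoc_matchingE;
    under [X in _ + X]eq_bigr do rewrite assoc_matchingE.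
  + rewrite [X in _ + X](bigD1 o) //= eqxx [X in _ + (_ + X)]big1 ?addr0 ?subrKC // => j.
    by rewrite eq_sym => /negbTE ->.
  + rewrite (bigD1 k) //= eqxx [X in _ + X + _]big1 ?addr0 ?subrK // => i.
    by rewrite eq_sym => /negbTE ->.
Qed.

Lemma assoc_matching_convex (k : nat) (lam : 'I_k -> R) (P : 'I_k -> 'M[R]_(n, m)) :
  \sum_t lam t = 1 ->
  assoc_matching (\sum_t lam t *: P t) = \sum_t lam t *: assoc_matching (P t).
Proof.
move=> lam_sum1; apply/matrixP => a c; rewrite summxE.
under [RHS]eq_bigr do rewrite mxE.
have sum_scale (F : 'I_k -> R) : \sum_t lam t * (1 - F t) = 1 - \sum_t lam t * F t.
  by under eq_bigr do rewrite mulrBr mulr1; rewrite sumrB lam_sum1.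
case: (split_ordP a) => [i ->|j ->]; case: (split_ordP c) => [o ->|l ->];
  rewrite !assoc_matchingE; under [RHS]eq_bigr do rewrite assoc_matchingE.
- by rewrite summxE; apply: eq_bigr => t _; rewrite mxE.
- case: eqP => _; last by rewrite big1 // => t _; rewrite mulr0.
  rewrite sum_scale; congr (1 - _); under eq_bigr do rewrite summxE.
  under eq_bigr do under eq_bigr do rewrite mxE.
  by rewrite exchange_big; apply: eq_bigr => t _; rewrite mulr_sumr.
- case: eqP => _; last by rewrite big1 // => t _; rewrite mulr0.
  rewrite sum_scale; congr (1 - _); under eq_bigr do rewrite summxE.
  under eq_bigr do under eq_bigr do rewrite mxE.
  by rewrite exchange_big; apply: eq_bigr => t _; rewrite mulr_sumr.
- by rewrite summxE; apply: eq_bigr => t _; rewrite mxE.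
Qed.

End AssocMatching.

Lemma ulsubmx_convex (R : realType) (n1 n2 m1 m2 k : nat) (lam : 'I_k -> R)
    (Q : 'I_k -> 'M[R]_(n1 + n2, m1 + m2)) :
  ulsubmx (\sum_t lam t *: Q t) = \sum_t lam t *: ulsubmx (Q t).
Proof.
by apply/matrixP => i j; rewrite !(mxE, summxE); apply: eq_bigr => t _; rewrite !mxE.
Qed.

Lemma assoc_matching_deterministic (R : realType) (n m : nat) (P : 'M[R]_(n, m)) :
  gen_deterministic P -> assoc_deterministic (assoc_matching P).
Proof.
move=> P_det; split; first exact: assoc_matching_bistochastic P_det.1.
have [_ P01] := P_det.
move=> a c; case: (split_ordP a) => [i ->|j ->]; case: (split_ordP c) => [o ->|k ->];
  rewrite assoc_matchingE //; case: eqP => _; auto.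
- by case: (gen_det_row_sum01 P_det i) => ->; rewrite ?subr0 ?subrr; auto.
- by case: (gen_det_col_sum01 P_det j) => ->; rewrite ?subr0 ?subrr; auto.
Qed.

Lemma ulsubmx_deterministic (R : realType) (n m : nat) (Q : 'M[R]_(n + m, m + n)) :
  assoc_deterministic Q -> gen_deterministic (ulsubmx Q).
Proof.
case=> -[Q_ge0 [Q_row Q_col]] Q01; split; last by move=> i o; rewrite !mxE.
split; [by move=> i o; rewrite !mxE | split].
- move=> i; rewrite -(Q_row (lshift m i)) big_split_ord /=.
  by under [X in X <= _]eq_bigr do rewrite !mxE; rewrite lerDl sumr_ge0.
- move=> o; rewrite -(Q_col (lshift n o)) big_split_ord /=.
  by under [X in X <= _]eq_bigr do rewrite !mxE; rewrite lerDl sumr_ge0.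
Qed.

Section AssocPartners.
Variables (R : realType) (n m : nat) (I : instance n m).

Lemma acceptable_of_matched (P : 'M[R]_(n, m)) i o :
  indiv_rational I P -> P i o = 1 -> acceptable I i o.
Proof.
move=> P_ir Pio; apply/negPn/negP; rewrite negb_and => unacc.
suff : P i o = 0 by rewrite Pio => /eqP; rewrite oner_eq0.
apply: P_ir; case/orP: unacc => [nacc_i|nacc_o]; apply/orP; [left|right].
  by move: (aprefs_null I i o); rewrite (negbTE nacc_i).
by move: (oprefs_null I o i); rewrite (negbTE nacc_o).
Qed.

Variables (Q : 'M[R]_(n + m, m + n)).
Hypotheses (Q_det : assoc_deterministic Q) (Q_ir : indiv_rational I (ulsubmx Q)).

Lemma sgt_assoc_apref_partner i o c' : Q (lshift m i) c' = 1 ->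
  sgt (assoc_apref I i) (lshift n o) c' =
  sgt (aprefs I i) (Some o) None &&
  (\sum_(o' | aprefs I i (Some o') (Some o)) ulsubmx Q i o' == 0).
Proof.
case: (split_ordP c') => [o' ->|k ->] Qic'.
- have Uio' : ulsubmx Q i o' = 1 by rewrite !mxE.
  have /andP[acc_o' _] := acceptable_of_matched Q_ir Uio'.
  rewrite assoc_apref_objects // (sgt_weak_order (aprefs_wo I i) (Some o) (Some o')).
  rewrite (sum_single_eq0 _ Uio') //.
  by move=> o'' ne; rewrite !mxE (assoc_det_row_single Q_det Qic') // eq_lshift.
- rewrite assoc_apref_object_null big1 ?eqxx ?andbT // => o'' _.
  by rewrite !mxE (assoc_det_row_single Q_det Qic') // eq_lrshift.
Qed.

Lemma sgt_assoc_opref_partner o i b : Q b (lshift n o) = 1 ->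
  sgt (assoc_opref I o) (lshift m i) b =
  sgt (oprefs I o) (Some i) None &&
  (\sum_(j | oprefs I o (Some j) (Some i)) ulsubmx Q j o == 0).
Proof.
case: (split_ordP b) => [i' ->|l ->] Qbo.
- have Ui'o : ulsubmx Q i' o = 1 by rewrite !mxE.
  have /andP[_ acc_i'] := acceptable_of_matched Q_ir Ui'o.
  rewrite assoc_opref_agents // (sgt_weak_order (oprefs_wo I o) (Some i) (Some i')).
  rewrite (sum_single_eq0 (F := ulsubmx Q ^~ o) _ Ui'o) //.
  by move=> j ne; rewrite !mxE (assoc_det_col_single Q_det Qbo) // eq_lshift.
- rewrite assoc_opref_agent_dummy big1 ?eqxx ?andbT // => j _.
  by rewrite !mxE (assoc_det_col_single Q_det Qbo) // eq_lrshift.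
Qed.

End AssocPartners.

Section AssocStable.
Variables (R : realType) (n m : nat) (I : instance n m) (P : 'M[R]_(n, m)).
Hypothesis P_ws : weakly_stable_det I P.
Local Notation ap := (aprefs I).
Local Notation op := (oprefs I).
Local Notation q := (assoc_matching P).

Let P_det : gen_deterministic P := P_ws.1.
Let P_ir : indiv_rational I P := P_ws.2.1.

Lemma agent_not_improving_to_null i k c' : q (lshift m i) c' = 1 ->
  sgt (assoc_apref I i) (rshift m k) c' = false.
Proof.
case: (split_ordP c') => [o ->|k' ->]; rewrite assoc_matchingE.
  move=> /(acceptable_of_matched P_ir) /andP[acc_o _].
  by rewrite assoc_apref_null_object acc_o.
by case/if_sub1_eq1 => /eqP -> _; rewrite assoc_apref_null_own.
Qed.

Lemma object_not_improving_to_dummy o j b : q b (lshift n o) = 1 ->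
  sgt (assoc_opref I o) (rshift n j) b = false.
Proof.
case: (split_ordP b) => [i ->|j' ->]; rewrite assoc_matchingE.
  move=> /(acceptable_of_matched P_ir) /andP[_ acc_i].
  by rewrite assoc_opref_dummy_agent acc_i.
by case/if_sub1_eq1 => /eqP -> _; rewrite assoc_opref_dummy_own.
Qed.

Lemma dummy_improving_to_null j k c' : q (rshift n j) c' = 1 ->
  sgt (assoc_dpref I j) (rshift m k) c' ->
  exists2 i, P i j = 1 & sgt (op j) (Some k) (Some i).
Proof.
case: (split_ordP c') => [o ->|i ->]; rewrite assoc_matchingE.
  move=> /if_sub1_eq1[/eqP -> _] pref; have := sgt_asym pref.
  by rewrite assoc_dpref_own_top // eq_rlshift.
by rewrite assoc_dpref_nulls; exists i.
Qed.

Lemma null_improving_to_dummy k j b : q b (rshift m k) = 1 ->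
  sgt (assoc_phipref I k) (rshift n j) b ->
  exists2 l, P k l = 1 & sgt (ap k) (Some j) (Some l).
Proof.
case: (split_ordP b) => [i ->|l ->]; rewrite assoc_matchingE.
  move=> /if_sub1_eq1[/eqP -> _] pref; have := sgt_asym pref.
  by rewrite assoc_phipref_own_top // eq_rlshift.
by rewrite assoc_phipref_dummies; exists l.
Qed.

Lemma assoc_matching_weakly_stable_det : assoc_weakly_stable_det I q.
Proof.
have [_ [_ P_nb]] := P_ws; have q_det := assoc_matching_deterministic P_det.
have q_ir : indiv_rational I (ulsubmx q) by rewrite ulsubmx_assoc_matching.
split=> // -[a [b [c [c' []]]]].
case: (split_ordP a) => [i ->|j ->]; case: (split_ordP c) => [o ->|k ->];
  rewrite !assoc_prefE => qac' qbc pref_a pref_c.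
- move: pref_a pref_c; rewrite (sgt_assoc_apref_partner q_det q_ir _ qac').
  rewrite (sgt_assoc_opref_partner q_det q_ir _ qbc) ulsubmx_assoc_matching.
  move=> /andP[acc_i /eqP sum_i] /andP[acc_o /eqP sum_o].
  by apply: P_nb; exists i, o; rewrite /acceptable acc_i acc_o.
- by rewrite agent_not_improving_to_null in pref_a.
- by rewrite object_not_improving_to_dummy in pref_c.
have [i Pij k_over_i] := dummy_improving_to_null qac' pref_a.
have [l Pkl j_over_l] := null_improving_to_dummy qbc pref_c.
have /andP[acc_l _] := acceptable_of_matched P_ir Pkl.
have /andP[_ acc_i] := acceptable_of_matched P_ir Pij.
apply: P_nb; exists k, j; split.
- rewrite /acceptable (sgt_trans (aprefs_wo I k) j_over_l acc_l).
  by rewrite (sgt_trans (oprefs_wo I j) k_over_i acc_i).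
- apply/eqP; rewrite (sum_single_eq0 _ Pkl).
    by move: j_over_l; rewrite (sgt_weak_order (aprefs_wo I k)).
  by move=> o; apply: gen_det_row_single Pkl.
- apply/eqP; rewrite (sum_single_eq0 (F := P^~ j) _ Pij).
    by move: k_over_i; rewrite (sgt_weak_order (oprefs_wo I j)).
  by move=> i'; apply: gen_det_col_single Pij.
Qed.

End AssocStable.

Section UlsubmxStable.
Variables (R : realType) (n m : nat) (I : instance n m) (Q : 'M[R]_(n + m, m + n)).
Hypothesis Q_ws : assoc_weakly_stable_det I Q.

Let Q_det : assoc_deterministic Q := Q_ws.1.

Lemma ulsubmx_indiv_rational : indiv_rational I (ulsubmx Q).
Proof.
have [_ Q_nb] := Q_ws; have [_ Q01] := Q_det.
move=> i o unacc; rewrite !mxE; case: (Q01 (lshift m i) (lshift n o)) => // Qio.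
have one_neq0 := oner_neq0 R; exfalso; case/orP: unacc => [unacc_i|unacc_o].
- have [b Qbk] := assoc_det_col_exists Q_det (rshift m i).
  have Qik : Q (lshift m i) (rshift m i) = 0.
    by apply: (assoc_det_row_single Q_det Qio); rewrite eq_rlshift.
  apply: Q_nb; exists (lshift m i), b, (rshift m i), (lshift n o).
  split=> //; rewrite !assoc_prefE; first by rewrite assoc_apref_null_object sgt_asym.
  apply: assoc_phipref_own_top; apply/eqP => b_i.
  by rewrite -Qbk b_i Qik eqxx in one_neq0.
- have [c' Qoc'] := assoc_det_row_exists Q_det (rshift n o).
  have Qoo : Q (rshift n o) (lshift n o) = 0.
    by apply: (assoc_det_col_single Q_det Qio); rewrite eq_rlshift.
  apply: Q_nb; exists (rshift n o), (lshift m i), (lshift n o), c'.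
  split=> //; rewrite !assoc_prefE; last by rewrite assoc_opref_dummy_agent sgt_asym.
  apply: assoc_dpref_own_top; apply/eqP => c'_o.
  by rewrite -Qoc' c'_o Qoo eqxx in one_neq0.
Qed.

Lemma ulsubmx_weakly_stable_det : weakly_stable_det I (ulsubmx Q).
Proof.
have [_ Q_nb] := Q_ws; have Q_ir := ulsubmx_indiv_rational.
split; first exact: ulsubmx_deterministic.
split=> // -[i [o [/andP[acc_i acc_o] sum_i sum_o]]].
have [c' Qic'] := assoc_det_row_exists Q_det (lshift m i).
have [b Qbo] := assoc_det_col_exists Q_det (lshift n o).
apply: Q_nb; exists (lshift m i), b, (lshift n o), c'; split=> //; rewrite !assoc_prefE.
- by rewrite (sgt_assoc_apref_partner Q_det Q_ir _ Qic') acc_i sum_i eqxx.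
- by rewrite (sgt_assoc_opref_partner Q_det Q_ir _ Qbo) acc_o sum_o eqxx.
Qed.

End UlsubmxStable.

Theorem proposition26 (R : realType) (n m : nat) (I : instance n m)
    (p : 'M[R]_(n, m)) :
  (0 < n)%N -> (0 < m)%N ->
  gen_random_matching p ->
  (ex_post_ws I p <->
   assoc_ex_post_ws I (assoc_matching p) /\ non_wasteful I p).
Proof.
move=> _ _ p_rm; split.
- case=> p_nw [k [lam [P [lam_01 lam_sum1 p_eq P_ws]]]].
  split=> //; split; first exact: assoc_matching_bistochastic.
  exists k, lam, (fun t => assoc_matching (P t)); split=> //.
  + by move=> t; case/andP: (lam_01 t).
  + by rewrite p_eq assoc_matching_convex.
  + by move=> t; apply: assoc_matching_weakly_stable_det.
- case=> -[_ [k [lam [Q [lam_gt0 lam_sum1 q_eq Q_ws]]]]] p_nw; split=> //.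
  exists k, lam, (fun t => ulsubmx (Q t)); split=> //.
  + by move=> t; rewrite lam_gt0 convex_weight_le1.
  + by rewrite -ulsubmx_convex -q_eq ulsubmx_assoc_matching.
  + by move=> t; apply: ulsubmx_weakly_stable_det.
Qed.
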